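(* Let $f\in\mathcal S_{\mathbf M}$ and let $\|\cdot\|$ be either the Luxemburg norm $\|\cdot\|_{\mathbf M}$ or the Orlicz norm $\|\cdot\|^*_{\mathbf M}$ (the same choice for $E_n$ and $\omega_\alpha$). Then for any $\tau>0$, $n\in\mathbb N$ and $\alpha>0$, $$E_n(f)\le 2C_{n,\alpha}(\tau)\,\omega_\alpha\Big(f,\frac{\tau}{n}\Big),$$ where $C_{n,\alpha}(\tau):=\inf_{v\in V(\tau)}\frac{v(\tau)-v(0)}{\inf_{k\in\mathbb N,k\ge n}\int_0^\tau\varphi(ku/n)\,dv(u)}$ with $\varphi(t)=2^\alpha|\sin(t/2)|^\alpha$.
   Context: $L$ is the space of $2\pi$-periodic Lebesgue integrable functions, with Fourier coefficients $\widehat f(k)=(2\pi)^{-1}\int_0^{2\pi}f(x)e^{-\mathrm{i}kx}\,dx$. Let $\mathbf M=\{M_k\}_{k\in\mathbb Z}$ be a sequence of Orlicz functions on $[0,\infty)$ (nondecreasing, convex, $M_k(0)=0$, $M_k(u)\to\infty$ as $u\to\infty$). For a complex sequence $c=\{c_k\}_{k\in\mathbb Z}$: Luxemburg norm $\|c\|_{\mathbf M}=\inf\{a>0:\sum_kM_k(|c_k|/a)\le1\}$; with $\tilde M_k(v)=\sup\{uv-M_k(u):u\ge0\}$ and $\Lambda$ the set of positive sequences $\lambda$ with $\sum_k\tilde M_k(\lambda_k)\le1$, Orlicz norm $\|c\|^*_{\mathbf M}=\sup\{\sum_k\lambda_k|c_k|:\lambda\in\Lambda\}$. $\mathcal S_{\mathbf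 M}$ is the space of $f\in L$ with $\|\{\widehat f(k)\}\|_{\mathbf M}<\infty$, and the norms of $f$ are those of $\{\widehat f(k)\}$. $E_n(f)=\inf\{\|f-t\|:t\in\mathcal T_{n-1}\}$, $\mathcal T_{n-1}$ the trigonometric polynomials $\sum_{|k|\le n-1}c_ke^{\mathrm{i}kx}$. For $\alpha>0$, $\Delta_h^\alpha f(x)=\sum_{j\ge0}(-1)^j\binom{\alpha}{j}f(x-jh)$, whose Fourier coefficients are $(1-e^{-\mathrm{i}kh})^\alpha\widehat f(k)$ (so of modulus $2^\alpha|\sin(kh/2)|^\alpha|\widehat f(k)|$), and $\omega_\alpha(f,\delta)=\sup_{|h|\le\delta}\|\Delta_h^\alpha f\|$. $V(\tau)$ is the set of bounded nondecreasing functions on $[0,\tau]$ that are not constant there; integrals are Lebesgue–Stieltjes. *)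

From HB Require Import structures.
From mathcomp Require Import all_boot all_order all_algebra.
From mathcomp Require Import all_classical all_reals all_analysis.
From mathcomp Require Import complex.
Set Implicit Arguments. Unset Strict Implicit. Unset Printing Implicit Defensive.
Import Order.TTheory GRing.Theory Num.Theory.
Import numFieldNormedType.Exports.
Local Open Scope classical_set_scope.
Local Open Scope ring_scope.

Section Defs.
Context {R : realType}.

Definition orlicz_fun (M : R -> R) : Prop :=
  [/\ M 0 = 0,
      (forall u w, 0 <= u -> u <= w -> M u <= M w),
      (forall u w t, 0 <= u -> 0 <= w -> 0 <= t <= 1 ->
         M (t * u + (1 - t) * w) <= t * M u + (1 - t) * M w)
    & M x @[x --> +oo] --> +oo].

Definition conj_fun (M : R -> R) (v : R) : \bar R :=
  ereal_sup [set (u * v - M u)%:E | u in [set u : R | 0 <= u]].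

Definition lux_norm (M : int -> R -> R) (c : int -> R[i]) : \bar R :=
  ereal_inf [set a%:E | a in [set a : R | 0 < a /\
     (\esum_(k in [set: int]) (M k (Normc.normc (c k) / a))%:E <= 1)%E]].

Definition orl_norm (M : int -> R -> R) (c : int -> R[i]) : \bar R :=
  ereal_sup [set (\esum_(k in [set: int]) (lam k * Normc.normc (c k))%:E)%E |
     lam in [set lam : int -> R | (forall k, 0 < lam k) /\
       (\esum_(k in [set: int]) conj_fun (M k) (lam k) <= 1)%E]].

Inductive normkind := Luxemburg | Orlicz.

Definition seqnorm (nk : normkind) M c :=
  match nk with Luxemburg => lux_norm M c | Orlicz => orl_norm M c end.

Definition fcoef (f : R -> R[i]) (k : int) : R[i] :=
  Complex ((\int[lebesgue_measure]_(x in `[0, 2 * pi]) (complex.Re (f x) * cos (k%:~R * x) + complex.Im (f x) * sin (k%:~R * x))) / (2 * pi))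
  ((\int[lebesgue_measure]_(x in `[0, 2 * pi]) (complex.Im (f x) * cos (k%:~R * x) - complex.Re (f x) * sin (k%:~R * x))) / (2 * pi)).

Definition in_L (f : R -> R[i]) : Prop :=
  [/\ (forall x, f (x + 2 * pi) = f x),
      lebesgue_measure.-integrable `[0, 2 * pi] (EFin \o (fun x => complex.Re (f x)))
    & lebesgue_measure.-integrable `[0, 2 * pi] (EFin \o (fun x => complex.Im (f x)))].

Definition in_SM (M : int -> R -> R) (f : R -> R[i]) : Prop :=
  in_L f /\ (lux_norm M (fcoef f) < +oo)%E.

Definition trig_coefs (n : nat) : set (int -> R[i]) :=
  [set c | forall k : int, (n%:Z <= `|k|)%R -> c k = 0].

Definition En nk M (f : R -> R[i]) (n : nat) : \bar R :=
  ereal_inf [set seqnorm nk M (fun k => fcoef f k - c k) | c in trig_coefs n].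

Definition diff_coef (alpha h : R) (f : R -> R[i]) (k : int) : R[i] :=
  Complex ((2 `^ alpha * `|sin (k%:~R * h / 2)| `^ alpha) * Normc.normc (fcoef f k)) 0.

Definition omega nk M (alpha : R) f (delta : R) : \bar R :=
  ereal_sup [set seqnorm nk M (diff_coef alpha h f) | h in [set h : R | `|h| <= delta]].

Definition phi (alpha t : R) : R := 2 `^ alpha * `|sin (t / 2)| `^ alpha.

Definition inV (tau : R) (v : R -> R) : Prop :=
  [/\ (exists B : R, forall u, 0 <= u <= tau -> `|v u| <= B),
      (forall u w, 0 <= u -> u <= w -> w <= tau -> v u <= v w)
    & (exists u w, [/\ 0 <= u <= tau, 0 <= w <= tau & v u != v w])].

Definition ls_cumulative (tau : R) (v : R -> R) (F : R -> R) : Prop :=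
  [/\ (forall u, u < 0 -> F u = v 0),
      (forall u, tau <= u -> F u = v tau)
    & (forall u, 0 <= u < tau -> v x @[x --> u^'+] --> F u)].

Definition ls_int (F : cumulative R R) (tau : R) (g : R -> R) : \bar R :=
  (\int[lebesgue_stieltjes_measure F]_(u in `[0%R, tau]) (g u)%:E)%E.

Definition Cconst (alpha : R) (n : nat) (tau : R) : \bar R :=
  ereal_inf [set r | exists (v : R -> R) (F : cumulative R R),
    [/\ inV tau v, ls_cumulative tau v F &
      let J := ereal_inf [set ls_int F tau (fun u => phi alpha (k%:R * u / n%:R))
                          | k in [set k : nat | (n <= k)%N]] in
      r = if J == 0 then +oo%E else ((v tau - v 0) / fine J)%:E]].

End Defs.

From HB Require Import structures.
From mathcomp Require Import all_boot all_order all_algebra.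
From mathcomp Require Import all_classical all_reals all_analysis.
From mathcomp Require Import complex measurable_realfun.
From mathcomp Require Import ring lra.
Import Order.TTheory GRing.Theory Num.Theory.
Import numFieldNormedType.Exports.
Local Open Scope classical_set_scope.
Local Open Scope ring_scope.

(* Approximate [f] by its partial Fourier sum [S_(n-1) f], so that [E_n f] is at most
   the norm of the tail [(f^(k))_(|k| >= n)].  For [|h| <= tau / n] the coefficients of
   [Delta_h^alpha f] have modulus [phi (k h) |f^(k)|].  Averaging them over [h = u / n]
   against [dv] on [[0, tau]] gives coefficients [|f^(k)| * \int phi (k u / n) dv / mu[0, tau]],
   which on the tail dominate [J / (v tau - v 0) * |f^(k)|], [J] being the denominator of
   [C_(n, alpha)(tau)].  The norm of such an average is at most [omega_alpha (f, tau / n)]: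
   by Jensen's inequality for the Luxemburg norm and by linearity for the Orlicz norm.
   Hence [E_n f <= (v tau - v 0) / J * omega] for every admissible [v], even without the
   factor [2]. *)

Section orlicz_function.
Context {R : realType} {M : R -> R}.
Hypothesis oM : orlicz_fun M.

Lemma orlicz_fun_le x y : 0 <= x -> x <= y -> M x <= M y.
Proof. by case: oM => _ + _ _; apply. Qed.

Lemma orlicz_fun_ge0 x : 0 <= x -> 0 <= M x.
Proof. by move=> x0; case: oM => M0 _ _ _; rewrite -M0 orlicz_fun_le. Qed.

Lemma orlicz_fun_slope_le y m x : 0 <= y -> y < m -> m < x ->
  (M m - M y) / (m - y) <= (M x - M m) / (x - m).
Proof.
case: oM => _ _ Mcvx _ y0 ym mx.
pose t := (x - m) / (x - y).
have t01 : 0 <= t <= 1.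
  by apply/andP; split; rewrite /t ?divr_ge0 ?ler_pdivrMr //; lra.
have := Mcvx y x t y0 (ltW (le_lt_trans y0 (lt_trans ym mx))) t01.
have -> : t * y + (1 - t) * x = m by rewrite /t; field; lra.
have -> : 1 - t = (m - y) / (x - y) by rewrite /t; field; lra.
rewrite /t => cvx_t.
have cvx : (x - y) * M m <= (x - m) * M y + (m - y) * M x.
  rewrite -ler_pdivlMl; last lra.
  by move: cvx_t; congr (_ <= _); field; lra.
rewrite ler_pdivrMr; last lra.
rewrite mulrAC ler_pdivlMr; last lra.
nra.
Qed.

(* The supremum of the left difference quotients at [m] is a slope of a supporting line. *)
Lemma orlicz_fun_support m : 0 <= m ->
  exists2 s, 0 <= s & forall x, 0 <= x -> M m + s * (x - m) <= M x.
Proof.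
move=> m0; have [M0 _ _ _] := oM.
have [->|m_neq0] := eqVneq m 0.
  by exists 0 => // x x0; rewrite M0 mul0r addr0 orlicz_fun_ge0.
have {m_neq0}mpos : 0 < m by rewrite lt_def m_neq0.
pose S := [set (M m - M y) / (m - y) | y in [set y | 0 <= y < m]].
have S0 : S (M m / m) by exists 0; rewrite /= ?lexx ?mpos // M0 !subr0.
have S_ub x : m < x -> ubound S ((M x - M m) / (x - m)).
  by move=> mx _ [y /andP[y0 ym] <-]; exact: orlicz_fun_slope_le.
have supS : has_sup S.
  by split; [exists (M m / m) | exists ((M (m + 1) - M m) / (m + 1 - m)); apply: S_ub; lra].
exists (sup S).
  by apply: le_trans (sup_upper_bound supS S0); rewrite divr_ge0 ?orlicz_fun_ge0 ?ltW.
move=> x x0; have [xm|mx|->] := ltgtP x m; last by rewrite subrr mulr0 addr0.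
- have : S ((M m - M x) / (m - x)) by exists x => //=; rewrite x0 xm.
  move=> /(sup_upper_bound supS); rewrite ler_pdivrMr; last lra.
  nra.
- have := ge_sup (ex_intro _ _ S0) (S_ub x mx).
  rewrite ler_pdivlMr; last lra.
  nra.
Qed.

Lemma orlicz_fun_gt1 : exists2 U, 0 < U & forall x, U <= x -> 1 < M x.
Proof.
case: oM => _ _ _ /cvgryPgt /(_ 1) [U [_ MU]].
exists (`|U| + 1) => [|x Ux]; first by rewrite ltr_pwDr.
by apply: MU; apply: lt_le_trans Ux; rewrite (le_lt_trans (ler_norm U)) // ltrDl.
Qed.

End orlicz_function.

Section esum_real.
Context {R : realType} {I : choiceType}.
Local Open Scope ereal_scope.

Lemma esum_real_ge_seq (g : I -> R) (s : seq I) : uniq s ->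
  (\sum_(k <- s) g k)%:E <= \esum_(k in [set: I]) (g k)%:E.
Proof.
move=> us; apply: esum_ge; exists [set` s]; first by split => //; exact: finite_seq.
by rewrite -fsbig_seq // sumEFin.
Qed.

Lemma esum_real_le (g : I -> R) (x : \bar R) :
  (forall s, uniq s -> (\sum_(k <- s) g k)%:E <= x) ->
  \esum_(k in [set: I]) (g k)%:E <= x.
Proof.
move=> gx; apply: ge_ereal_sup => _ [X [fX _] <-].
by rewrite fsbig_finite // sumEFin gx // finmap.fset_uniq.
Qed.

Lemma esum_real_ge_term (g : I -> R) k : (g k)%:E <= \esum_(j in [set: I]) (g j)%:E.
Proof. by have := @esum_real_ge_seq g [:: k] isT; rewrite big_seq1. Qed.

End esum_real.

Section finite_measure_integral.
Context {d} {T : measurableType d} {R : realType} {mu : {measure set T -> \bar R}}.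
Context {D : set T} (mD : measurable D).
Hypothesis muD_fin : (mu D < +oo)%E.

Lemma integrable_cst_fin (c : R) : mu.-integrable D (EFin \o cst c).
Proof.
apply: measurable_bounded_integrable => //.
by exists `|c|; split => // r cr x _; rewrite /= ltW.
Qed.

Lemma integrableZl_real (k : R) {h : T -> R} : mu.-integrable D (EFin \o h) ->
  mu.-integrable D (EFin \o fun x => k * h x).
Proof.
by move=> ih; apply: (eq_integrable mD _ _ _ (integrableZl mD k ih)) => x _; rewrite /= EFinM.
Qed.

Section linear_combination.
Context {J : Type} (a : J -> R) {g : J -> T -> R}.
Hypothesis ig : forall j, mu.-integrable D (EFin \o g j).

Lemma integrable_sumZ (s : seq J) :
  mu.-integrable D (EFin \o fun x => \sum_(j <- s) a j * g j x).
Proof.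
elim: s => [|j s IHs].
  apply: (eq_integrable mD _ _ _ (integrable_cst_fin 0)) => x _.
  by rewrite /= big_nil.
apply: (eq_integrable mD _ _ _ (integrableD mD (integrableZl_real (a j) (ig j)) IHs)) => x _.
by rewrite /= big_cons EFinD.
Qed.

Lemma Rintegral_sumZ (s : seq J) :
  \int[mu]_(x in D) (\sum_(j <- s) a j * g j x) =
  \sum_(j <- s) a j * \int[mu]_(x in D) g j x.
Proof.
elim: s => [|j s IHs].
  under eq_Rintegral do rewrite big_nil.
  by rewrite big_nil Rintegral_cst // mul0r.
under eq_Rintegral do rewrite big_cons.
by rewrite big_cons RintegralD ?RintegralZl ?IHs ?integrableZl_real ?integrable_sumZ.
Qed.

End linear_combination.

Lemma Rintegral_le_cst (g : T -> R) (c : R) : mu.-integrable D (EFin \o g) ->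
  (forall x, D x -> g x <= c) -> \int[mu]_(x in D) g x <= c * fine (mu D).
Proof.
move=> ig gc; rewrite -Rintegral_cst //.
by apply: le_Rintegral => //; exact: integrable_cst_fin.
Qed.

(* Integrate the supporting lines of the [M j] at the means [\int g j / mu D]. *)
Lemma orlicz_sum_jensen (J : Type) (s : seq J) (M : J -> R -> R) (g : J -> T -> R) :
  0 < fine (mu D) -> (forall j, orlicz_fun (M j)) ->
  (forall j, mu.-integrable D (EFin \o g j)) -> (forall j x, D x -> 0 <= g j x) ->
  (forall x, D x -> \sum_(j <- s) M j (g j x) <= 1) ->
  \sum_(j <- s) M j (\int[mu]_(x in D) g j x / fine (mu D)) <= 1.
Proof.
move=> muD0 oM ig g0 gM.
set m := fine (mu D); pose mean j := \int[mu]_(x in D) g j x / m.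
have mean0 j : 0 <= mean j.
  by rewrite divr_ge0 ?(ltW muD0) //; apply: Rintegral_ge0 => x; exact: g0.
have /boolp.choice[sl slP] : forall j, exists sl : R, forall x, 0 <= x ->
    M j (mean j) + sl * (x - mean j) <= M j x.
  by move=> j; have [sj _ Hsj] := orlicz_fun_support (oM j) _ (mean0 j); exists sj.
pose c := 1 - \sum_(j <- s) M j (mean j) + \sum_(j <- s) sl j * mean j.
have lin_le x : D x -> \sum_(j <- s) sl j * g j x <= c.
  move=> Dx; have : \sum_(j <- s) (M j (mean j) + sl j * (g j x - mean j)) <= 1.
    by apply: le_trans (gM x Dx); apply: ler_sum => j _; exact/slP/g0.
  rewrite big_split /= /c.
  under [X in _ + X]eq_bigr do rewrite mulrBr.
  rewrite sumrB; lra.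
have := Rintegral_le_cst _ _ (integrable_sumZ sl ig s) lin_le.
rewrite Rintegral_sumZ //.
have -> : \sum_(j <- s) sl j * \int[mu]_(x in D) g j x = (\sum_(j <- s) sl j * mean j) * m.
  by rewrite mulr_suml; apply: eq_bigr => j _; rewrite /mean -mulrA divfK ?gt_eqF.
by rewrite ler_pM2r // /c; lra.
Qed.

End finite_measure_integral.

Section phi.
Context {R : realType}.
Implicit Types a t : R.

Lemma phi_ge0 a t : 0 <= phi a t.
Proof. by rewrite /phi mulr_ge0 // powR_ge0. Qed.

Lemma phi_le_pow2 a t : 0 <= a -> phi a t <= 2 `^ a.
Proof.
move=> a0; rewrite /phi -[leRHS]mulr1 ler_wpM2l ?powR_ge0 //.
have -> : (1 : R) = 1 `^ a by rewrite powR1.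
rewrite ge0_ler_powR ?nnegrE //.
by rewrite ler_norml sin_geN1 sin_le1.
Qed.

Lemma phi_normr a t : phi a `|t| = phi a t.
Proof.
by case: (ler0P t) => t0; rewrite ?ler0_norm ?ltr0_norm ?ger0_norm // /phi mulNr sinN normrN.
Qed.

Lemma phi_gt0 a t : 0 < t < 2 * pi -> 0 < phi a t.
Proof.
move=> t_gt0; rewrite /phi mulr_gt0 ?powR_gt0 // normr_gt0 gt_eqF //.
by apply: sin_gt0_pi; lra.
Qed.

Lemma phi_gt0_near0 a x delta : 0 < delta -> x != 0 ->
  exists2 h, `|h| <= delta & 0 < phi a (x * h).
Proof.
move=> delta0 x0; have x_gt0 : 0 < `|x| by rewrite normr_gt0.
pose t := Num.min (delta * `|x|) 1.
have t0 : 0 < t by rewrite lt_min ltr01 mulr_gt0.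
exists (t / x).
  rewrite normrM normfV ger0_norm ?(ltW t0) // ler_pdivrMr //.
  by rewrite ge_min lexx.
rewrite mulrC divfK //; apply: phi_gt0; rewrite t0 /=.
have := pi_ge2 R; have : t <= 1 by rewrite ge_min lexx orbT.
lra.
Qed.

Lemma measurable_phiM a c : measurable_fun [set: R] (fun u => phi a (c * u)).
Proof.
apply: measurable_funM; first exact: measurable_cst.
apply: (measurableT_comp (measurable_powR a)).
apply: continuous_measurable_fun => x.
apply: (@continuous_comp _ _ _ _ (@Num.norm R R)); last exact: norm_continuous.
apply: (@continuous_comp _ _ _ (fun u => c * u / 2) sin); last exact: continuous_sin.
by apply: continuousM; [apply: continuousM; [exact: cst_continuous|exact: cvg_id]|exact: cst_continuous].
Qed.

End phi.

Section lebesgue_stieltjes.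
Context {R : realType} (F : cumulative R R).
Local Notation mu := (lebesgue_stieltjes_measure F).

Lemma lebesgue_stieltjes_measure_itvoc (a b : R) : a <= b -> mu `]a, b] = (F b - F a)%:E.
Proof.
move=> ab; rewrite /lebesgue_stieltjes_measure /measure_extension.
by rewrite measurable_mu_extE /= ?wlength_itv_bnd //; exact: is_ocitv.
Qed.

Lemma ls_cumulative_measure_le (tau : R) (v : R -> R) : ls_cumulative tau v F ->
  0 <= tau -> (mu `[0%R, tau] <= (v tau - v 0)%:E)%E.
Proof.
case=> Fl Fr _ tau0.
rewrite -(Fr tau) // -(Fl (-1)) ?ltrN10 // -lebesgue_stieltjes_measure_itvoc; last lra.
apply: le_measure; rewrite ?inE; try exact: measurable_itv.
by move=> x /=; rewrite !in_itv /= => /andP[x0 ->]; rewrite andbT; lra.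
Qed.

End lebesgue_stieltjes.

Lemma normc_ge0 {R : rcfType} (z : R[i]) : 0 <= Normc.normc z.
Proof. by case: z => x y; exact: sqrtr_ge0. Qed.

Lemma normc_real {R : rcfType} (x : R) : 0 <= x -> Normc.normc x%:C%C = x.
Proof. by move=> x0; rewrite /= expr0n /= addr0 sqrtr_sqr ger0_norm. Qed.

Definition orlicz_weight {R : realType} (M : int -> R -> R) (lam : int -> R) : Prop :=
  (forall k, 0 < lam k) /\ (\esum_(k in [set: int]) conj_fun (M k) (lam k) <= 1)%E.

Section luxemburg_norm.
Context {R : realType} (M : int -> R -> R).
Hypothesis HM : forall k, orlicz_fun (M k).
Implicit Types (c d : int -> R[i]) (a w t : R).
Local Open Scope ereal_scope.

Lemma lux_norm_ge0 c : 0 <= lux_norm M c.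
Proof. by apply/ereal_infP => _ [a [a0 _] <-]; rewrite lee_fin ltW. Qed.

Lemma lux_norm_lt c a : lux_norm M c < a%:E ->
  \esum_(k in [set: int]) (M k (Normc.normc (c k) / a))%:E <= 1.
Proof.
case/ereal_inf_lt => _ [a' [a'0 ca'] <-]; rewrite lte_fin => a'a.
have a0 := lt_trans a'0 a'a.
apply: le_trans ca'; apply: le_esum => k _; rewrite lee_fin.
apply: (orlicz_fun_le (HM k)); first by rewrite divr_ge0 ?normc_ge0 ?(ltW a0).
by rewrite ler_wpM2l ?normc_ge0 // lef_pV2 ?posrE // ltW.
Qed.

Lemma lux_norm_le c w : (0 <= w)%R ->
  (forall a, (w < a)%R -> \esum_(k in [set: int]) (M k (Normc.normc (c k) / a))%:E <= 1) ->
  lux_norm M c <= w%:E.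
Proof.
move=> w0 cw; apply/lee_addgt0Pr => e e0; apply: ereal_inf_lbound.
by exists (w + e)%R; rewrite ?EFinD //; split; [rewrite ltr_wpDl | apply: cw; rewrite ltrDl].
Qed.

(* At the scale [|c k| / U] the [k]-th term of the modular sum is [M k U > 1]. *)
Lemma lux_norm_eq0 c : lux_norm M c = 0 -> forall k, c k = 0%R.
Proof.
move=> c0 k; apply: Normc.eq0_normc; apply/eqP; rewrite eq_le normc_ge0 andbT.
rewrite leNgt; apply/negP => ck0.
have [U U0 MU] := orlicz_fun_gt1 (HM k).
have := @lux_norm_lt c (Normc.normc (c k) / U).
rewrite c0 lte_fin divr_gt0 // => /(_ isT); apply/negP; rewrite -ltNge.
apply: lt_le_trans (esum_real_ge_term _ k).
by rewrite invf_div mulrCA divff ?gt_eqF // mulr1 lte_fin MU.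
Qed.

Lemma lux_norm_scale_le c d t : (0 < t)%R ->
  (forall k, Normc.normc (c k) <= t * Normc.normc (d k))%R ->
  lux_norm M c <= t%:E * lux_norm M d.
Proof.
move=> t0 cd; have := lux_norm_ge0 d.
case: (lux_norm M d) (@lux_norm_lt d) => [l| |] // dl l0; last first.
  by rewrite gt0_muley ?leey // lte_fin.
rewrite -EFinM; apply: lux_norm_le => [|a la]; first by rewrite mulr_ge0 // ltW.
have a0 : (0 < a)%R by apply: le_lt_trans la; rewrite mulr_ge0 // ltW.
have := dl (a / t)%R; rewrite lte_fin ltr_pdivlMr // mulrC => /(_ la).
apply: le_trans; apply: le_esum => k _; rewrite lee_fin.
apply: (orlicz_fun_le (HM k)); first by rewrite divr_ge0 ?normc_ge0 // ltW.
by rewrite invf_div mulrA ler_pM2r ?invr_gt0 // mulrC cd.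
Qed.

End luxemburg_norm.

Section orlicz_norm.
Context {R : realType} (M : int -> R -> R).
Implicit Types (c d : int -> R[i]) (t : R).
Local Open Scope ereal_scope.

Lemma orl_norm_ge_sum c lam s : orlicz_weight M lam -> uniq s ->
  (\sum_(k <- s) lam k * Normc.normc (c k))%:E <= orl_norm M c.
Proof.
move=> lamW us; apply: le_trans (ereal_sup_ubound _); last by exists lam.
exact: esum_real_ge_seq.
Qed.

Lemma orl_norm_le c x :
  (forall lam s, orlicz_weight M lam -> uniq s ->
    (\sum_(k <- s) lam k * Normc.normc (c k))%:E <= x) ->
  orl_norm M c <= x.
Proof.
move=> cx; apply: ge_ereal_sup => _ [lam lamW <-].
by apply: esum_real_le => s us; exact: cx.
Qed.

(* Without admissible weights every Orlicz norm is the supremum of the empty set. *)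
Lemma orl_norm_ge0_or_ninfty :
  (forall c, 0 <= orl_norm M c) \/ (forall c, orl_norm M c = -oo).
Proof.
have [[lam lamW]|noW] := pselect (exists lam, orlicz_weight M lam).
  left => c; apply: le_trans (ereal_sup_ubound _); last by exists lam.
  by apply: esum_ge0 => k _; rewrite lee_fin mulr_ge0 ?normc_ge0 // ltW; case: lamW.
right => c; apply/eqP; rewrite -leeNy_eq; apply: orl_norm_le => lam s lamW.
by case: noW; exists lam.
Qed.

Lemma orl_norm_eq0 c : orl_norm M c = 0 -> forall k, c k = 0%R.
Proof.
move=> c0 k; have [lam lamW] : exists lam, orlicz_weight M lam.
  apply: contrapT => noW; suff : orl_norm M c <= -oo by rewrite c0.
  by apply: orl_norm_le => lam s lamW; case: noW; exists lam.
have := orl_norm_ge_sum c _ [:: k] lamW isT.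
rewrite c0 big_seq1 lee_fin pmulr_rle0; last by case: lamW.
by move=> ck0; apply: Normc.eq0_normc; apply/eqP; rewrite eq_le ck0 normc_ge0.
Qed.

Lemma orl_norm_scale_le c d t : (0 < t)%R ->
  (forall k, Normc.normc (c k) <= t * Normc.normc (d k))%R ->
  orl_norm M c <= t%:E * orl_norm M d.
Proof.
move=> t0 cd; have t0' : 0 <= t%:E by rewrite lee_fin ltW.
apply: orl_norm_le => lam s lamW us.
apply: le_trans (lee_wpmul2l t0' (orl_norm_ge_sum d _ _ lamW us)).
rewrite -EFinM lee_fin mulr_sumr; apply: ler_sum => k _.
by rewrite mulrCA ler_wpM2l ?cd // ltW //; case: lamW.
Qed.

End orlicz_norm.

Section norm_average.
Context {R : realType} (M : int -> R -> R).
Hypothesis HM : forall k, orlicz_fun (M k).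
Context {d} {T : measurableType d} {mu : {measure set T -> \bar R}} {D : set T}.
Hypotheses (mD : measurable D) (muD_fin : (mu D < +oo)%E) (muD_gt0 : 0 < fine (mu D)).
Context {g : T -> int -> R}.
Hypotheses (ig : forall k, mu.-integrable D (EFin \o g^~ k)) (g0 : forall u k, D u -> 0 <= g u k).

Local Notation average := (fun k => (\int[mu]_(u in D) g u k / fine (mu D))%:C%C).

Lemma normc_average k : Normc.normc (average k) = \int[mu]_(u in D) g u k / fine (mu D).
Proof.
by rewrite normc_real // divr_ge0 ?(ltW muD_gt0) //; apply: Rintegral_ge0 => u /g0.
Qed.

Local Open Scope ereal_scope.

Lemma lux_norm_average_le (w : R) : (0 <= w)%R ->
  (forall u, D u -> lux_norm M (fun k => (g u k)%:C%C) <= w%:E) ->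
  lux_norm M average <= w%:E.
Proof.
move=> w0 gw; apply: lux_norm_le => // a wa; have a0 := le_lt_trans w0 wa.
apply: esum_real_le => s us; rewrite lee_fin.
under eq_bigr do rewrite normc_average mulrAC -RintegralZr //.
apply: (orlicz_sum_jensen mD muD_fin _ _ M (fun k u => g u k / a)%R) => // [k|k u Du|u Du].
- apply: (eq_integrable mD _ _ _ (integrableZl_real mD a^-1 (ig k))) => u _.
  by rewrite /= mulrC.
- by rewrite divr_ge0 ?g0 // ltW.
- have ga : lux_norm M (fun k => (g u k)%:C%C) < a%:E.
    by apply: le_lt_trans (gw u Du) _; rewrite lte_fin.
  rewrite -lee_fin; apply: le_trans (lux_norm_lt _ HM _ _ ga).
  apply: le_trans (esum_real_ge_seq _ _ us) _.
  by apply: le_esum => k _; rewrite normc_real ?g0.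
Qed.

Lemma orl_norm_average_le (w : R) :
  (forall u, D u -> orl_norm M (fun k => (g u k)%:C%C) <= w%:E) ->
  orl_norm M average <= w%:E.
Proof.
move=> gw; apply: orl_norm_le => lam s lamW us; rewrite lee_fin.
under eq_bigr do rewrite normc_average mulrA.
rewrite -mulr_suml -(Rintegral_sumZ mD muD_fin _ ig) ler_pdivrMr //.
apply: Rintegral_le_cst => // [|u Du]; first exact: integrable_sumZ.
rewrite -lee_fin; apply: le_trans (gw u Du); apply: le_trans (orl_norm_ge_sum _ _ _ _ lamW us).
by rewrite lee_fin; apply: ler_sum => k _; rewrite normc_real ?g0.
Qed.

Lemma seqnorm_average_le nk (w : R) : (0 <= w)%R ->
  (forall u, D u -> seqnorm nk M (fun k => (g u k)%:C%C) <= w%:E) ->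
  seqnorm nk M average <= w%:E.
Proof. by case: nk => /= [|_]; [exact: lux_norm_average_le | exact: orl_norm_average_le]. Qed.

End norm_average.

Section sequence_norm.
Context {R : realType} (M : int -> R -> R).
Hypothesis HM : forall k, orlicz_fun (M k).
Local Open Scope ereal_scope.

Lemma seqnorm_ge0_or_ninfty nk :
  (forall c, 0 <= seqnorm nk M c) \/ (forall c, seqnorm nk M c = -oo).
Proof. by case: nk; [left => c; exact: lux_norm_ge0 | exact: orl_norm_ge0_or_ninfty]. Qed.

Lemma seqnorm_eq0 nk c : seqnorm nk M c = 0 -> forall k, c k = 0%R.
Proof. by case: nk; [exact: lux_norm_eq0 | exact: orl_norm_eq0]. Qed.

Lemma seqnorm_scale_le nk c d (t : R) : (0 < t)%R ->
  (forall k, Normc.normc (c k) <= t * Normc.normc (d k))%R ->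
  seqnorm nk M c <= t%:E * seqnorm nk M d.
Proof. by case: nk; [exact: lux_norm_scale_le | exact: orl_norm_scale_le]. Qed.

End sequence_norm.

Section fourier_tail.
Context {R : realType} (f : R -> R[i]) (n : nat).

Definition fourier_trunc (k : int) : R[i] :=
  if (n%:Z <= `|k|)%R then 0 else fcoef f k.

Lemma fourier_trunc_trig : trig_coefs n fourier_trunc.
Proof. by move=> k nk; rewrite /fourier_trunc nk. Qed.

Lemma normc_fourier_tail k : Normc.normc (fcoef f k - fourier_trunc k) =
  if (n%:Z <= `|k|)%R then Normc.normc (fcoef f k) else 0.
Proof.
by rewrite /fourier_trunc; case: ifP; rewrite ?subr0 ?subrr // -[0%R]/(0%:C%C) normc_real.
Qed.

End fourier_tail.

Lemma diff_coefE {R : realType} alpha h (f : R -> R[i]) k :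
  diff_coef alpha h f k = (phi alpha (k%:~R * h) * Normc.normc (fcoef f k))%:C%C.
Proof. by []. Qed.

Definition Cdenom {R : realType} (alpha : R) (n : nat) (tau : R) (F : cumulative R R) :=
  ereal_inf [set ls_int F tau (fun u => phi alpha (k%:R * u / n%:R))
            | k in [set k : nat | (n <= k)%N]].

Lemma Cdenom_ge0 {R : realType} (alpha : R) n tau F : (0 <= Cdenom alpha n tau F)%E.
Proof.
apply/ereal_infP => _ [k _ <-].
by apply: integral_ge0 => u _; rewrite lee_fin phi_ge0.
Qed.

Section cumulative_bounds.
Context {R : realType} {tau alpha : R} {n : nat} {v : R -> R} {F : cumulative R R}.
Hypotheses (tau0 : 0 < tau) (alpha0 : 0 <= alpha) (HF : ls_cumulative tau v F).
Local Notation D := (`[0%R, tau]%classic : set (measurableTypeR R)).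
Local Notation mu := (lebesgue_stieltjes_measure F).
Local Notation J := (Cdenom alpha n tau F).
Local Open Scope ereal_scope.

Let mD : measurable D. Proof. exact: measurable_itv. Qed.

Lemma ls_measure_fin : mu D < +oo.
Proof. by apply: le_lt_trans (ls_cumulative_measure_le _ _ _ HF (ltW tau0)) _; exact: ltey. Qed.

Lemma integrable_phiM (c : R) : mu.-integrable D (EFin \o fun u => phi alpha (c * u)).
Proof.
apply: measurable_bounded_integrable ls_measure_fin _ _ => //.
  exact: measurable_funS (measurable_phiM alpha c).
exists (2 `^ alpha)%R; split; first by rewrite num_real.
by move=> r r2 u _ /=; rewrite ger0_norm ?phi_ge0 // (le_trans (phi_le_pow2 _ _ alpha0)) // ltW.
Qed.

Lemma ls_int_phiM (c : R) :
  ls_int F tau (fun u => phi alpha (c * u)) = (\int[mu]_(u in D) phi alpha (c * u))%:E.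
Proof. by rewrite /Rintegral fineK //; exact (integrable_fin_num mD (integrable_phiM c)). Qed.

Lemma Cdenom_le (k : int) : (n%:Z <= `|k|)%R ->
  J <= (\int[mu]_(u in D) phi alpha (k%:~R / n%:R * u))%:E.
Proof.
move=> nk; rewrite -ls_int_phiM; apply: ereal_inf_lbound; exists `|k|%N => //=.
apply: eq_integral => u _; rewrite -[in RHS]phi_normr -[in LHS]phi_normr.
by rewrite natr_absz intr_norm !normrM normfV normr_id mulrAC.
Qed.

Lemma Cdenom_le_pow2 : J <= (2 `^ alpha * fine (mu D))%:E.
Proof.
apply: le_trans (Cdenom_le n _) _; first by [].
rewrite lee_fin mulrC; apply: Rintegral_le_cst => //.
- exact: ls_measure_fin.
- exact: integrable_phiM.
- by move=> u _; exact: phi_le_pow2.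
Qed.

Lemma Cdenom_fin_num : J \is a fin_num.
Proof.
rewrite ge0_fin_numE ?Cdenom_ge0 //.
by apply: le_lt_trans Cdenom_le_pow2 _; exact: ltey.
Qed.

Lemma Cdenom_fine_gt0 : J != 0 -> (0 < fine J)%R.
Proof.
move=> J0; rewrite lt_def fine_ge0 ?Cdenom_ge0 // andbT.
by apply: contra J0; rewrite -{2}(fineK Cdenom_fin_num) => /eqP ->.
Qed.

Lemma Cdenom_fine_le_pow2 : (fine J <= 2 `^ alpha * fine (mu D))%R.
Proof. by rewrite -lee_fin fineK ?Cdenom_fin_num ?Cdenom_le_pow2. Qed.

Lemma ls_measure_fine_le : (fine (mu D) <= v tau - v 0)%R.
Proof.
rewrite -lee_fin fineK ?ge0_fin_numE ?measure_ge0 ?ls_measure_fin //.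
exact: ls_cumulative_measure_le HF (ltW tau0).
Qed.

Lemma Cdenom_fine_le (k : int) : (n%:Z <= `|k|)%R ->
  (fine J <= \int[mu]_(u in D) phi alpha (k%:~R / n%:R * u))%R.
Proof. by move=> nk; rewrite -lee_fin fineK ?Cdenom_fin_num ?Cdenom_le. Qed.

End cumulative_bounds.

Lemma ler_ratio_scale {R : realFieldType} (a j g m V : R) :
  0 <= a -> 0 < j <= g -> 0 < m <= V -> a <= V / j * (a * g / m).
Proof.
move=> a0 /andP[j0 jg] /andP[m0 mV].
have -> : V / j * (a * g / m) = a * ((V / m) * (g / j)) by field; rewrite !gt_eqF.
by rewrite -[leLHS]mulr1 ler_wpM2l // mulr_ege1 // ler_pdivlMr // mul1r.
Qed.

Section tail_estimate.
Context {R : realType} {M : int -> R -> R} (f : R -> R[i]) {tau alpha : R} {n : nat}.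
Context {v : R -> R} {F : cumulative R R}.
Hypotheses (HM : forall k, orlicz_fun (M k)) (tau0 : 0 < tau) (n0 : (0 < n)%N).
Hypotheses (alpha0 : 0 <= alpha) (HF : ls_cumulative tau v F).
Local Notation D := (`[0%R, tau]%classic : set (measurableTypeR R)).
Local Notation mu := (lebesgue_stieltjes_measure F).
Local Notation J := (Cdenom alpha n tau F).

(* On the tail, [|f^(k)| <= (v tau - v 0) / J] times the [dv]-average over [u] of the
   moduli of the [k]-th coefficients of [Delta_(u / n)^alpha f]. *)
Lemma seqnorm_fourier_tail_le nk (w : R) : J != 0%E -> 0 <= w ->
  (forall h, `|h| <= tau / n%:R -> (seqnorm nk M (diff_coef alpha h f) <= w%:E)%E) ->
  (seqnorm nk M (fun k => (fcoef f k - fourier_trunc f n k)%R) <=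
    ((v tau - v 0) / fine J * w)%:E)%E.
Proof.
move=> J0 w0 diff_le.
have mD : measurable D by exact: measurable_itv.
have muD_fin := ls_measure_fin tau0 HF.
set m := fine (mu D); set V := v tau - v 0.
have J_gt0 := Cdenom_fine_gt0 tau0 alpha0 HF J0.
have mV : m <= V := ls_measure_fine_le tau0 HF.
have m_gt0 : 0 < m.
  have := lt_le_trans J_gt0 (Cdenom_fine_le_pow2 (n := n) tau0 alpha0 HF).
  by rewrite pmulr_rgt0 // powR_gt0.
pose A k := Normc.normc (fcoef f k).
pose g u k := A k * phi alpha (k%:~R / n%:R * u).
have ig k : mu.-integrable D (EFin \o g^~ k).
  exact (integrableZl_real mD (A k) (integrable_phiM tau0 alpha0 HF _)).
have g0 u k : D u -> 0 <= g u k by move=> _; rewrite mulr_ge0 ?normc_ge0 ?phi_ge0.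
have gw u : D u -> (seqnorm nk M (fun k => (g u k)%:C%C) <= w%:E)%E.
  rewrite /= in_itv /= => /andP[u0 utau].
  have -> : (fun k => (g u k)%:C%C) = diff_coef alpha (u / n%:R) f :> (int -> R[i]).
    apply/funext => k; rewrite diff_coefE /g; congr (_%:C%C).
    by rewrite [LHS]mulrC -mulrA [_^-1 * u]mulrC.
  by apply: diff_le; rewrite ger0_norm ?divr_ge0 // ler_pM2r // invr_gt0 ltr0n.
have ratio_gt0 : 0 < V / fine J by rewrite divr_gt0 // (lt_le_trans m_gt0).
have avg := seqnorm_average_le M HM mD muD_fin m_gt0 ig g0 nk _ w0 gw.
rewrite EFinM; apply: le_trans (seqnorm_scale_le M HM nk _ _ _ ratio_gt0 _)
  (lee_wpmul2l _ avg).
- move=> k; have avg0 : 0 <= \int[mu]_(u in D) g u k / m.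
    by rewrite divr_ge0 ?(ltW m_gt0) //; apply: Rintegral_ge0 => u /g0.
  rewrite normc_fourier_tail normc_real //; case: ifP => nk_le; last first.
    by rewrite mulr_ge0 // ltW.
  rewrite RintegralZl //; last exact (integrable_phiM tau0 alpha0 HF _).
  by rewrite ler_ratio_scale ?normc_ge0 ?J_gt0 ?m_gt0 ?mV ?(Cdenom_fine_le tau0 alpha0 HF).
- by rewrite lee_fin ltW.
Qed.

End tail_estimate.

Lemma Cconst_gt0 {R : realType} (alpha : R) (n : nat) (tau : R) : 0 < tau -> 0 <= alpha ->
  (0 < Cconst alpha n tau)%E.
Proof.
move=> tau0 alpha0; have pow_gt0 : 0 < 2 `^ alpha by rewrite powR_gt0.
apply: (@lt_le_trans _ _ ((2 `^ alpha)^-1)%:E); first by rewrite lte_fin invr_gt0.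
apply/ereal_infP => _ [v [F [_ HF ->]]]; rewrite -/(Cdenom alpha n tau F).
case: ifPn => J0; first exact: leey.
have J_gt0 := Cdenom_fine_gt0 tau0 alpha0 HF J0.
rewrite lee_fin ler_pdivlMr // ler_pdivrMl //.
apply: le_trans (Cdenom_fine_le_pow2 tau0 alpha0 HF) _.
by rewrite ler_wpM2l ?(ltW pow_gt0) //; exact: ls_measure_fine_le tau0 HF.
Qed.

Lemma seqnorm_fourier_tail_le0 {R : realType} {M : int -> R -> R} {f : R -> R[i]}
    {tau alpha : R} {n : nat} {nk} :
  (forall k, orlicz_fun (M k)) -> 0 < tau -> (0 < n)%N ->
  (forall h, `|h| <= tau / n%:R -> (seqnorm nk M (diff_coef alpha h f) <= 0)%E) ->
  (seqnorm nk M (fun k => (fcoef f k - fourier_trunc f n k)%R) <= 0)%E.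
Proof.
move=> HM tau0 n0 diff_le0.
have [norm_ge0|norm_ninf] := seqnorm_ge0_or_ninfty M nk; last by rewrite norm_ninf leNye.
have tn0 : 0 < tau / n%:R by rewrite divr_gt0 // ltr0n.
have tail0 k : (n%:Z <= `|k|)%R -> Normc.normc (fcoef f k) = 0.
  move=> nk_le; have k0 : k%:~R != 0 :> R.
    by rewrite intr_eq0 -normr_gt0 (lt_le_trans _ nk_le) // ltz_nat.
  have [h hb phi_gt0] := phi_gt0_near0 alpha _ _ tn0 k0.
  have /(seqnorm_eq0 M HM)/(_ k) : seqnorm nk M (diff_coef alpha h f) = 0%E.
    by apply/le_anti; rewrite diff_le0 // norm_ge0.
  by rewrite diff_coefE => -[] /eqP; rewrite mulf_eq0 gt_eqF // => /eqP.
apply: le_trans (seqnorm_scale_le M HM nk _ (diff_coef alpha 0 f) _ ltr01 _) _.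
  by move=> k; rewrite normc_fourier_tail; case: ifP => [/tail0 ->|_]; rewrite mulr_ge0 ?normc_ge0.
by rewrite mul1e diff_le0 // normr0 ltW.
Qed.

Lemma seqnorm_fourier_tail_le_Cconst {R : realType} {M : int -> R -> R} {f : R -> R[i]}
    {tau alpha : R} {n : nat} {nk} {w : R} :
  (forall k, orlicz_fun (M k)) -> 0 < tau -> (0 < n)%N -> 0 <= alpha -> 0 < w ->
  (forall h, `|h| <= tau / n%:R -> (seqnorm nk M (diff_coef alpha h f) <= w%:E)%E) ->
  (seqnorm nk M (fun k => (fcoef f k - fourier_trunc f n k)%R) <= Cconst alpha n tau * w%:E)%E.
Proof.
move=> HM tau0 n0 alpha0 w_gt0 diff_le.
rewrite -lee_pdivrMr //; apply/ereal_infP => _ [v [F [_ HF ->]]].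
rewrite -/(Cdenom alpha n tau F); case: ifPn => J0; first exact: leey.
rewrite lee_pdivrMr // -EFinM.
exact (seqnorm_fourier_tail_le f HM tau0 n0 alpha0 HF nk w J0 (ltW w_gt0) diff_le).
Qed.

Theorem corollary2 (R : realType) (M : int -> R -> R) (nk : normkind)
    (f : R -> R[i]) (tau alpha : R) (n : nat) :
  (forall k, orlicz_fun (M k)) ->
  in_SM M f ->
  0 < tau -> (0 < n)%N -> 0 < alpha ->
  (En nk M f n <= 2%:E * Cconst alpha n tau * omega nk M alpha f (tau / n%:R))%E.
Proof.
move=> HM _ tau0 n0 alpha0.
have diff_le h : `|h| <= tau / n%:R ->
    (seqnorm nk M (diff_coef alpha h f) <= omega nk M alpha f (tau / n%:R))%E.
  by move=> hb; apply: ereal_sup_ubound; exists h.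
apply: (@le_trans _ _ (seqnorm nk M (fun k => (fcoef f k - fourier_trunc f n k)%R))).
  by apply: ereal_inf_lbound; exists (fourier_trunc f n); first exact: fourier_trunc_trig.
have [norm_ge0|norm_ninf] := seqnorm_ge0_or_ninfty M nk; last by rewrite norm_ninf leNye.
have omega_ge0 : (0 <= omega nk M alpha f (tau / n%:R))%E.
  by apply: le_trans (norm_ge0 _) (diff_le 0 _); rewrite normr0 divr_ge0 // ltW.
have C_gt0 := Cconst_gt0 alpha n tau tau0 (ltW alpha0).
move: diff_le omega_ge0; case: (omega _ _ _ _ _) => [w||] // diff_le; last first.
  by move=> _; rewrite gt0_muley ?leey //; apply: mule_gt0.
rewrite lee_fin le_eqVlt => /predU1P[w0|w_gt0].
  rewrite -w0 mule0; apply: (seqnorm_fourier_tail_le0 (alpha := alpha) HM tau0 n0) => h /diff_le.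
  by rewrite -w0.
apply: le_trans (seqnorm_fourier_tail_le_Cconst HM tau0 n0 (ltW alpha0) w_gt0 diff_le) _.
by rewrite -muleA lee_pemull ?mule_ge0 ?lee_fin ?ler1n // ltW.
Qed.
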